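(* Let $p$ be a state and let $r\in p^{TP}=\{Tp:T\in TP(d)\}$. Then $r$ lies on the boundary of $p^{TP}$, regarded as a subset of the affine hyperplane $\{x\in\mathbb{R}^d:\sum_i x_i=1\}$, if and only if at least one elbow of $\beta(r)$ lies on $\beta(p)$.
   Context: Fix $d\ge 2$, $\beta\in(0,\infty)$ and pairwise distinct reals $E_0=0,E_1,\dots,E_{d-1}$. Put $q_{m,n}=e^{-\beta(E_m-E_n)}$, $Z=\sum_j q_{j,0}$, $g_i=q_{i,0}/Z$. A state is a probability vector in $\mathbb{R}^d$. $TP(d)$ is the set of $d\times d$ real matrices with non-negative entries, columns summing to $1$, and $Tg=g$. For a state $p$ choose a permutation $\pi$ of $\{0,\dots,d-1\}$ with $p_{\pi(0)}/g_{\pi(0)}\ge\dots\ge p_{\pi(d-1)}/g_{\pi(d-1)}$; let $x_k=\sum_{i\le k}g_{\pi(i)}$, $y_k=\sum_{i\le k}p_{\pi(i)}$. The thermomajorization curve $\beta(p)$ is the graph of the concave piecewise-linear function on $[0,1]$ through $(0,0),(x_0,y_0),\dots,(x_{d-1},y_{d-1})=(1,1)$. The elbows of $\beta(p)$ are the points $(x_k,y_k)$ for $k=0,\dots,d-2$. A point $(x,y)$ lies on $\beta(p)$ if $y$ equals the value of that function at $x$. *)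

From HB Require Import structures.
From mathcomp Require Import all_boot all_order all_algebra all_fingroup.
From mathcomp Require Import reals sequences exp.
Set Implicit Arguments. Unset Strict Implicit. Unset Printing Implicit Defensive.
Import Order.TTheory GRing.Theory Num.Theory.
Local Open Scope ring_scope.

Section Thermo.
Variables (R : realType) (d : nat).

Definition qfac (beta : R) (E : 'I_d -> R) (m n : 'I_d) : R :=
  expR (- beta * (E m - E n)).

(* Gibbs state g_i = q_{i,0} / Z, Z = sum_j q_{j,0}; the index 0 is i0. *)
Definition gibbs (beta : R) (E : 'I_d -> R) (i0 : 'I_d) : 'cV[R]_d :=
  \col_i (qfac beta E i i0 / \sum_(j < d) qfac beta E j i0).

Definition is_state (p : 'cV[R]_d) : Prop :=
  (forall i, 0 <= p i ord0) /\ \sum_(i < d) p i ord0 = 1.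

Definition is_TP (g : 'cV[R]_d) (T : 'M[R]_d) : Prop :=
  [/\ forall i j, 0 <= T i j, forall j, \sum_(i < d) T i j = 1 & T *m g = g].

Definition thermal_orbit (g p : 'cV[R]_d) : 'cV[R]_d -> Prop :=
  fun r => exists T, is_TP g T /\ r = T *m p.

(* boundary of S relative to the affine hyperplane H = {x | sum_i x_i = 1}
   (subspace topology; coordinatewise (sup) distance) *)
Definition in_hyperplane (x : 'cV[R]_d) : Prop := \sum_(i < d) x i ord0 = 1.

Definition rel_boundary (S : 'cV[R]_d -> Prop) (r : 'cV[R]_d) : Prop :=
  in_hyperplane r /\
  (forall eps : R, 0 < eps -> exists x, [/\ in_hyperplane x,
      (forall i, `|x i ord0 - r i ord0| < eps) & S x]) /\
  (forall eps : R, 0 < eps -> exists x, [/\ in_hyperplane x,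
      (forall i, `|x i ord0 - r i ord0| < eps) & ~ S x]).

Definition admissible (g p : 'cV[R]_d) (s : 'S_d) : Prop :=
  forall i j : 'I_d, (i <= j)%N -> p (s j) ord0 / g (s j) ord0 <= p (s i) ord0 / g (s i) ord0.

Definition xk (g : 'cV[R]_d) (s : 'S_d) (k : nat) : R :=
  \sum_(i < d | (i <= k)%N) g (s i) ord0.
Definition yk (p : 'cV[R]_d) (s : 'S_d) (k : nat) : R :=
  \sum_(i < d | (i <= k)%N) p (s i) ord0.
(* the previous vertex (x_{k-1}, y_{k-1}), with (x_{-1},y_{-1}) = (0,0) *)
Definition xprev (g : 'cV[R]_d) (s : 'S_d) (k : nat) : R :=
  \sum_(i < d | (i < k)%N) g (s i) ord0.
Definition yprev (p : 'cV[R]_d) (s : 'S_d) (k : nat) : R :=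
  \sum_(i < d | (i < k)%N) p (s i) ord0.

Definition is_elbow (g r : 'cV[R]_d) (pt : R * R) : Prop :=
  exists s : 'S_d, admissible g r s /\
    exists k : 'I_d, (k.+1 < d)%N /\ pt = (xk g s k, yk r s k).

(* (x,y) lies on beta(p): y is the value at x of the piecewise-linear
   function through (0,0),(x_0,y_0),...,(x_{d-1},y_{d-1}) *)
Definition on_curve (g p : 'cV[R]_d) (pt : R * R) : Prop :=
  exists s : 'S_d, admissible g p s /\
    exists k : 'I_d,
      [/\ xprev g s k <= pt.1, pt.1 <= xk g s k &
          pt.2 = yprev p s k + (pt.1 - xprev g s k) * (p (s k) ord0 / g (s k) ord0)].

End Thermo.

(* If an elbow (x_k, y_k) of beta(r) lies on beta(p), then, in the ordering of
   r, the k-th partial sum of every T p with T in TP(d) is at most y_k, because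
   the curve of T p stays below the concave curve beta(p) (a fractional knapsack
   bound).  Moving a little mass from the last to the first coordinate of r
   raises that partial sum, so points outside the orbit come arbitrarily close
   to r.
   Conversely, if no elbow of beta(r) touches beta(p), then for some mu > 0 the
   point (1 + mu) r - mu g is still thermomajorized by p; a Gibbs-preserving
   stochastic map realizing this is built by induction on blocks of the ordering
   of r, mixing towards g until the two curves touch and splitting there.  When
   p <> g, the orbit also contains a neighbourhood of g in the hyperplane
   (perturb the map g 1^T by a rank-one term), and r is a convex combination of
   (1 + mu) r - mu g and a point of that neighbourhood with positive weight on
   the latter, hence an interior point.  When p = g the orbit is {g}, and the
   first elbow of beta(g) lies on the diagonal beta(g). *)

From HB Require Import structures.
From mathcomp Require Import all_boot all_order all_algebra all_fingroup.
From mathcomp Require Import reals sequences exp.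
From mathcomp Require Import zify ring lra.
From Stdlib Require Import Classical_Prop.
Import Order.TTheory GRing.Theory Num.Theory.
Local Open Scope ring_scope.

Section BlockMaps.
Variables (R : realFieldType) (n : nat) (w : 'I_n -> R) (pos : 'I_n -> nat).
Hypothesis w_gt0 : forall i, 0 < w i.

Definition in_block a b i := (a <= pos i < b)%N.
Definition block_sum (f : 'I_n -> R) a b := \sum_(i | in_block a b i) f i.
Definition prefix_sum (f : 'I_n -> R) a b k :=
  \sum_(i | in_block a b i && (pos i <= k)%N) f i.

Definition block_map a b (S : 'M[R]_n) (v y : 'I_n -> R) :=
  [/\ forall i j, 0 <= S i j,
      forall i j, ~~ (in_block a b i && in_block a b j) -> S i j = 0,
      forall j, in_block a b j -> \sum_i S i j = 1,
      forall i, in_block a b i -> \sum_j S i j * w j = w i &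
      forall i, in_block a b i -> \sum_j S i j * v j = y i].

Definition ratio_sorted (x : 'I_n -> R) a b := forall i j,
  in_block a b i -> in_block a b j -> (pos i <= pos j)%N -> x j / w j <= x i / w i.

Lemma eq_block_map a b S v y y' : block_map a b S v y' ->
  (forall i, in_block a b i -> y i = y' i) -> block_map a b S v y.
Proof. by move=> [h0 h1 h2 h3 h4] e; split => // i hi; rewrite e //; apply: h4. Qed.

Lemma block_map0 a b v y : (forall i, ~~ in_block a b i) -> block_map a b 0 v y.
Proof.
move=> he; split => [i j|i j _|j hj|j hj|j hj]; rewrite ?mxE //;
  by move: (he j); rewrite hj.
Qed.

Lemma block_map_mul a b S1 S2 v v' y :
  block_map a b S1 v' y -> block_map a b S2 v v' -> block_map a b (S1 *m S2) v y.
Proof.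
case=> [h10 h1s h1c h1w h1v] [h20 h2s h2c h2w h2v].
have through_block i (f : 'I_n -> R) : in_block a b i ->
    \sum_j (S1 *m S2) i j * f j = \sum_l S1 i l * \sum_j S2 l j * f j.
  move=> hi; under eq_bigr do rewrite mxE big_distrl /=.
  rewrite exchange_big /=; apply: eq_bigr => l _; rewrite big_distrr /=.
  by apply: eq_bigr => j _; rewrite mulrA.
split.
- by move=> i j; rewrite mxE; apply: sumr_ge0 => l _; apply: mulr_ge0.
- move=> i j /negP hij; rewrite mxE; apply: big1 => l _.
  case: (boolP (in_block a b i)) => hi; last by rewrite h1s ?mul0r // (negbTE hi).
  case: (boolP (in_block a b j)) => hj; last by rewrite (h2s l j) ?mulr0 // (negbTE hj) andbF.
  by case: hij; rewrite hi hj.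
- move=> j hj; under eq_bigr do rewrite mxE.
  rewrite exchange_big /= -(h2c j hj); apply: eq_bigr => l _; rewrite -big_distrl /=.
  case: (boolP (in_block a b l)) => hl; first by rewrite h1c // mul1r.
  by rewrite (h2s l j) ?mulr0 // (negbTE hl).
- move=> i hi; rewrite through_block // -(h1w i hi); apply: eq_bigr => l _.
  case: (boolP (in_block a b l)) => hl; first by rewrite h2w.
  by rewrite h1s ?mul0r // (negbTE hl) andbF.
- move=> i hi; rewrite through_block // -(h1v i hi); apply: eq_bigr => l _.
  case: (boolP (in_block a b l)) => hl; first by rewrite h2v.
  by rewrite h1s ?mul0r // (negbTE hl) andbF.
Qed.

Lemma block_map_add a m b S1 S2 v y : (a <= m <= b)%N ->
  block_map a m S1 v y -> block_map m b S2 v y -> block_map a b (S1 + S2) v y.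
Proof.
move=> hm [h10 h1s h1c h1w h1v] [h20 h2s h2c h2w h2v].
have hB i : in_block a b i = in_block a m i || in_block m b i by rewrite /in_block; lia.
have hD1 i : in_block a m i -> ~~ in_block m b i by rewrite /in_block; lia.
have hD2 i : in_block m b i -> ~~ in_block a m i by rewrite /in_block; lia.
have row_sum i (f : 'I_n -> R) (y1 : R) : in_block a b i ->
    (in_block a m i -> \sum_j S1 i j * f j = y1) ->
    (in_block m b i -> \sum_j S2 i j * f j = y1) -> \sum_j (S1 + S2) i j * f j = y1.
  rewrite hB => /orP[] hi e1 e2; under eq_bigr do rewrite mxE mulrDl; rewrite big_split /=.
  + by rewrite e1 // big1 ?addr0 // => j _; rewrite h2s ?mul0r // (negbTE (hD1 _ hi)).
  + by rewrite e2 // big1 ?add0r // => j _; rewrite h1s ?mul0r // (negbTE (hD2 _ hi)).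
split.
- by move=> i j; rewrite mxE; apply: addr_ge0.
- move=> i j hij; rewrite mxE h1s ?h2s ?addr0 //.
  + by apply: contra hij => /andP[h1 h2]; rewrite !hB h1 h2 !orbT.
  + by apply: contra hij => /andP[h1 h2]; rewrite !hB h1 h2.
- move=> j; rewrite hB => /orP[] hj; under eq_bigr do rewrite mxE; rewrite big_split /=.
  + rewrite h1c // big1 ?addr0 // => i _.
    by apply: h2s; rewrite (negbTE (hD1 _ hj)) andbF.
  + rewrite h2c // big1 ?add0r // => i _.
    by apply: h1s; rewrite (negbTE (hD2 _ hj)) andbF.
- by move=> i hi; apply: row_sum => // [/h1w|/h2w].
- by move=> i hi; apply: row_sum => // [/h1v|/h2v].
Qed.

Lemma block_sum_ge0 a b : 0 <= block_sum w a b.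
Proof. by apply: sumr_ge0 => i _; apply: ltW. Qed.

Lemma block_sum_gt0 {a b i} : in_block a b i -> 0 < block_sum w a b.
Proof.
move=> hi; rewrite /block_sum (bigD1 i) //=; apply: ltr_pwDl; first exact: w_gt0.
by apply: sumr_ge0 => j _; apply: ltW.
Qed.

Lemma block_sum_delta {a b i} (f : 'I_n -> R) : in_block a b i ->
  \sum_(j | in_block a b j) (i == j)%:R * f j = f i.
Proof.
move=> hi; rewrite (bigD1 i) //= eqxx mul1r big1 ?addr0 // => j /andP[_ hj].
by rewrite eq_sym (negbTE hj) mul0r.
Qed.

Definition mix a b (t : R) : 'M[R]_n := \matrix_(i, j)
  if in_block a b i && in_block a b j then
    (1 - t) * (i == j)%:R + t * (w i / block_sum w a b) else 0.

Lemma mix_row a b t i (f : 'I_n -> R) : in_block a b i ->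
  \sum_j mix a b t i j * f j = (1 - t) * f i + t * (w i * block_sum f a b / block_sum w a b).
Proof.
move=> hi; rewrite (bigID (in_block a b)) /= [X in _ + X]big1 ?addr0; last first.
  by move=> j hj; rewrite mxE (negbTE hj) andbF mul0r.
under eq_bigr => j hj do rewrite mxE hi hj /= mulrDl -!mulrA.
rewrite big_split /= -!big_distrr /= block_sum_delta //.
by rewrite -/(block_sum f a b) -mulrA [_ / _]mulrC.
Qed.

Lemma mix_block_map a b t v : 0 <= t <= 1 -> block_map a b (mix a b t) v
  (fun i => (1 - t) * v i + t * (w i * block_sum v a b / block_sum w a b)).
Proof.
move=> /andP[t0 t1]; split => [i j|i j hij|j hj|i hi|i hi]; rewrite ?mix_row //.
- rewrite mxE; case: ifP => // _; apply: addr_ge0.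
  + by apply: mulr_ge0; [lra | case: (i == j)].
  + by apply: mulr_ge0 => //; apply: divr_ge0; [apply: ltW | apply: block_sum_ge0].
- by rewrite mxE (negbTE hij).
- have W0 := block_sum_gt0 hj.
  under eq_bigr do rewrite mxE hj andbT eq_sym.
  rewrite -big_mkcond /= big_split /= -!big_distrr /= -mulr_suml.
  have -> : \sum_(i | in_block a b i) (j == i)%:R = 1 :> R.
    rewrite -[RHS](block_sum_delta (fun _ => 1) hj).
    by apply: eq_bigr => i _; rewrite mulr1.
  by rewrite -/(block_sum w a b) divff ?mulr1; [lra | apply: lt0r_neq0].
- by rewrite mulfK ?(lt0r_neq0 (block_sum_gt0 hi)); lra.
Qed.

Lemma prefix_sum_full {a b k} : (b <= k.+1)%N -> forall f,
  prefix_sum f a b k = block_sum f a b.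
Proof. by move=> hk f; apply: eq_bigl => i; rewrite /in_block; lia. Qed.

Lemma prefix_sum_split {a m b} : (a <= m <= b)%N -> forall f k,
  prefix_sum f a b k = prefix_sum f a m k + prefix_sum f m b k.
Proof.
move=> hm f k; rewrite /prefix_sum (bigID (fun i => pos i < m)%N) /=.
by congr (_ + _); apply: eq_bigl => i; rewrite /in_block; lia.
Qed.

Lemma block_sum_split {a m b} : (a <= m <= b)%N -> forall f,
  block_sum f a b = block_sum f a m + block_sum f m b.
Proof.
move=> hm f; rewrite /block_sum (bigID (fun i => pos i < m)%N) /=.
by congr (_ + _); apply: eq_bigl => i; rewrite /in_block; lia.
Qed.

Lemma prefix_sum_restrict {a b m} : (m.+1 <= b)%N -> forall f k,
  prefix_sum f a m.+1 k = prefix_sum f a b (minn k m).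
Proof. by move=> hm f k; apply: eq_bigl => i; rewrite /in_block; lia. Qed.

Lemma block_sum_restrict {a b m} : (m.+1 <= b)%N -> forall f,
  block_sum f a m.+1 = prefix_sum f a b m.
Proof. by move=> hm f; apply: eq_bigl => i; rewrite /in_block; lia. Qed.

Lemma ratio_sorted_sub {x a b a' b'} : (a <= a')%N -> (b' <= b)%N ->
  ratio_sorted x a b -> ratio_sorted x a' b'.
Proof.
move=> ha hb hx i j hi hj; apply: hx; move: hi hj; rewrite /in_block; lia.
Qed.

Lemma prefix_sum_chord x a b k : ratio_sorted x a b ->
  prefix_sum w a b k * block_sum x a b <= prefix_sum x a b k * block_sum w a b.
Proof.
move=> hx; rewrite /block_sum (bigID (fun i => pos i <= k)%N) /=.
rewrite [X in _ <= _ * X](bigID (fun i => pos i <= k)%N) /=.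
rewrite -/(prefix_sum w a b k) -/(prefix_sum x a b k) !mulrDr.
rewrite [prefix_sum x a b k * _]mulrC lerD2l !big_distrlr /=.
apply: ler_sum => i /andP[hi hik]; apply: ler_sum => j /andP[hj hjk].
have hw := w_gt0 i; have hw' := w_gt0 j.
have hij : x j / w j <= x i / w i by apply: hx => //; lia.
have -> : w i * x j = w i * w j * (x j / w j) by field; apply: lt0r_neq0.
have -> : x i * w j = w i * w j * (x i / w i) by field; apply: lt0r_neq0.
by apply: ler_wpM2l => //; apply: mulr_ge0; apply: ltW.
Qed.

Lemma prefix_sum_mix v a b k (t M W : R) :
  prefix_sum (fun i => (1 - t) * v i + t * (w i * M / W)) a b k =
  prefix_sum v a b k - t * (prefix_sum v a b k - prefix_sum w a b k * M / W).
Proof. by rewrite /prefix_sum big_split /= -!big_distrr /= -!mulr_suml; ring. Qed.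

Lemma prefix_dominance_split x y a b m : (a <= m)%N -> (m.+1 < b)%N ->
  (forall k, prefix_sum x a b k <= prefix_sum y a b k) ->
  prefix_sum x a b m = prefix_sum y a b m -> block_sum x a b = block_sum y a b ->
  [/\ forall k, prefix_sum x a m.+1 k <= prefix_sum y a m.+1 k,
      block_sum x a m.+1 = block_sum y a m.+1,
      forall k, prefix_sum x m.+1 b k <= prefix_sum y m.+1 b k &
      block_sum x m.+1 b = block_sum y m.+1 b].
Proof.
move=> ha hb hdom hm htot; have hb' : (m.+1 <= b)%N by lia.
have hsplit : (a <= m.+1 <= b)%N by lia.
split.
- by move=> k; rewrite !(prefix_sum_restrict hb').
- by rewrite !(block_sum_restrict hb').
- move=> k; have ex := prefix_sum_split hsplit x k.
  have ey := prefix_sum_split hsplit y k.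
  rewrite !(prefix_sum_restrict hb') in ex ey.
  have := hdom k; case: (leqP k m) => hk.
    by move: ex ey; rewrite (minn_idPl hk); lra.
  by move: ex ey; rewrite (minn_idPr (ltnW hk)); lra.
- have ex := block_sum_split hsplit x; have ey := block_sum_split hsplit y.
  by rewrite !(block_sum_restrict hb') in ex ey; lra.
Qed.

Lemma block_map_flat x v a b : (b <= a.+1)%N -> ratio_sorted x a b ->
  block_sum x a b = block_sum v a b -> exists S, block_map a b S v x.
Proof.
move=> hab hx htot; exists (mix a b 1).
have h01 : 0 <= (1 : R) <= 1 by rewrite ler01 lexx.
refine (@eq_block_map a b _ v x _ (mix_block_map a b 1 v h01) _) => i hi /=.
have W0 := lt0r_neq0 (block_sum_gt0 hi).
rewrite subrr mul0r add0r mul1r -htot.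
have -> : w i * block_sum x a b = x i * block_sum w a b.
  rewrite /block_sum !big_distrr /=; apply: eq_bigr => j hj.
  have hw := lt0r_neq0 (w_gt0 i); have hw' := lt0r_neq0 (w_gt0 j).
  have e : x j / w j = x i / w i.
    by apply/le_anti; rewrite !hx //; move: hi hj; rewrite /in_block; lia.
  have -> : x j = w j * (x i / w i) by rewrite -e; field.
  by field.
by field.
Qed.

Lemma exists_touching_scale a b (c D : nat -> R) : (a.+1 < b)%N ->
  (forall k, 0 <= D k <= c k) ->
  (forall k, ~~ ((a <= k)%N && (k.+1 < b)%N) -> c k = 0) ->
  exists t ks, [/\ 0 <= t <= 1, (a <= ks)%N, (ks.+1 < b)%N,
                   forall k, t * c k <= D k & t * c ks = D ks].
Proof.
move=> hab hDc hout; have hD0 k : 0 <= D k by case/andP: (hDc k).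
have hzero k : c k = 0 -> D k = 0.
  by move=> hc; apply/le_anti; have := hDc k; rewrite hc => /andP[-> ->].
pose P (k : 'I_b) := (a <= k)%N && (k.+1 < b)%N.
case: (boolP [exists k, P k && (c k == 0)]).
  case/existsP => k /andP[/andP[hk1 hk2] /eqP hk]; exists 0, k.
  split => //; first by rewrite lexx ler01.
    by move=> k'; rewrite mul0r.
  by rewrite mul0r hzero.
move=> hnone; have hcpos k : P k -> 0 < c k.
  move=> hk; rewrite lt_def (le_trans (hD0 k)) ?andbT; last by case/andP: (hDc k).
  by apply: contra hnone => hck; apply/existsP; exists k; rewrite hk.
have P0 : P (Ordinal (ltnW hab)) by rewrite /P /= leqnn.
case: (arg_minP (fun k : 'I_b => D k / c k) P0) => ks hks hmin.
have cks := hcpos _ hks; case/andP: hks => hks1 hks2.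
exists (D ks / c ks), ks; split => //.
- rewrite divr_ge0 ?ler_pdivrMr ?mul1r //=; [by case/andP: (hDc ks) | exact: ltW].
- move=> k; case: (boolP ((a <= k)%N && (k.+1 < b)%N)) => hk; last first.
    by rewrite (hout k hk) mulr0.
  have hkb : (k < b)%N by case/andP: hk => _ /ltnW.
  have := hmin (Ordinal hkb) hk.
  by rewrite ler_pdivlMr ?(hcpos (Ordinal hkb) hk) // mulrC.
- by rewrite divfK // lt0r_neq0.
Qed.

(* Induction on the length of the block: mix [v] towards the flat
   distribution until its curve touches that of [x] at some position [ks],
   then treat the two sub-blocks on either side of [ks] separately. *)
Lemma block_map_exists x v a b : ratio_sorted x a b ->
  (forall k, prefix_sum x a b k <= prefix_sum v a b k) ->
  block_sum x a b = block_sum v a b -> exists S, block_map a b S v x.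
Proof.
have [N] := ubnP (b - a); elim: N => // N IH in v a b *.
move=> hN hx hdom htot.
case: (leqP b a.+1) => hab; first exact: block_map_flat.
case: (boolP [exists i, in_block a b i]) => [/existsP[i0 hi0]|hne]; last first.
  exists 0; apply: block_map0 => i; apply: contra hne => hi; apply/existsP; by exists i.
have Wn0 := lt0r_neq0 (block_sum_gt0 hi0).
set W := block_sum w a b; set M := block_sum v a b.
pose c k := prefix_sum v a b k - prefix_sum w a b k * M / W.
pose D k := prefix_sum v a b k - prefix_sum x a b k.
have [t [ks [ht hks1 hks2 hle heq]]] : exists t ks, [/\ 0 <= t <= 1,
    (a <= ks)%N, (ks.+1 < b)%N, forall k, t * c k <= D k & t * c ks = D ks].
  apply: exists_touching_scale => // k.
    rewrite /D /c subr_ge0 hdom lerD2l lerN2 ler_pdivrMr ?lt_def ?Wn0 ?block_sum_ge0 //.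
    by rewrite /M -htot prefix_sum_chord.
  rewrite negb_and -!ltnNge => /orP[hk|hk].
    by rewrite /c /prefix_sum !big_pred0 ?mul0r ?subrr // => i; rewrite /in_block; lia.
  by rewrite /c !(prefix_sum_full (hk : (b <= k.+1)%N)) -/W -/M mulrAC divff // mul1r subrr.
pose v' i := (1 - t) * v i + t * (w i * M / W).
have hv' k : prefix_sum v' a b k = prefix_sum v a b k - t * c k by apply: prefix_sum_mix.
have dom' k : prefix_sum x a b k <= prefix_sum v' a b k.
  by rewrite hv'; have := hle k; rewrite /D; lra.
have eq' : prefix_sum x a b ks = prefix_sum v' a b ks by rewrite hv' heq /D; lra.
have tot' : block_sum x a b = block_sum v' a b.
  rewrite -!(prefix_sum_full (leqnSn b)) hv' /c !(prefix_sum_full (leqnSn b)).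
  by rewrite -/W -/M htot mulrAC divff // mul1r subrr mulr0 subr0.
have [hdom1 htot1 hdom2 htot2] :=
  @prefix_dominance_split x v' a b ks hks1 hks2 dom' eq' tot'.
have [S1 hS1] : exists S, block_map a ks.+1 S v' x.
  by apply: (IH _ _ _ _ (ratio_sorted_sub _ _ hx) hdom1 htot1); lia.
have [S2 hS2] : exists S, block_map ks.+1 b S v' x.
  by apply: (IH _ _ _ _ (ratio_sorted_sub _ _ hx) hdom2 htot2); lia.
exists ((S1 + S2) *m mix a b t).
apply: block_map_mul (mix_block_map _ _ _ v ht); apply: block_map_add hS1 hS2; lia.
Qed.

End BlockMaps.

Arguments in_block {n} pos a b i.
Arguments block_sum {R n} pos f a b.
Arguments prefix_sum {R n} pos f a b k.

Lemma exists_perm_sorted {R : realDomainType} {d} (c : 'I_d -> R) :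
  exists s : 'S_d, forall i j : 'I_d, (i <= j)%N -> c (s j) <= c (s i).
Proof.
case: d c => [|d] c; first by exists 1%g => -[].
pose leT a b := c b <= c a.
pose l := sort leT (enum 'I_d.+1).
have hperm : perm_eq l (enum 'I_d.+1) by rewrite perm_sort.
have hsz : size l = d.+1 by rewrite (perm_size hperm) size_enum_ord.
have hu : uniq l by rewrite (perm_uniq hperm) enum_uniq.
have finj : injective (fun i : 'I_d.+1 => nth ord0 l i).
  by move=> i j /eqP; rewrite nth_uniq ?hsz // => /eqP; apply: val_inj.
exists (perm finj) => i j hij; rewrite !permE.
have hs : sorted leT l by apply: sort_sorted => a b; apply: le_total.
have htr : transitive leT by move=> a b e h1 h2; apply: le_trans h2 h1.
by apply: (sorted_leq_nth htr (fun a => lexx (c a)) ord0 hs); rewrite ?inE ?hsz.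
Qed.

Lemma sum_perm (V : nmodType) n (F : 'I_n -> V) (s : 'S_n) :
  \sum_i F (s i) = \sum_i F i.
Proof. by rewrite [RHS](reindex_inj (@perm_inj _ s)). Qed.

Lemma exists_pos_lower_bound {R : realFieldType} {n} {P : pred 'I_n} {f : 'I_n -> R} :
  (forall k, P k -> 0 < f k) -> exists m, 0 < m /\ forall k, P k -> m <= f k.
Proof.
move=> hf; have hS : 0 <= \sum_(k | P k) (f k)^-1.
  by apply: sumr_ge0 => k hk; rewrite invr_ge0 ltW // hf.
exists (1 + \sum_(k | P k) (f k)^-1)^-1; split; first by rewrite invr_gt0; lra.
move=> k hk; have hfk := hf k hk.
have h1 : (f k)^-1 <= \sum_(k | P k) (f k)^-1.
  rewrite (bigD1 k) //= lerDl; apply: sumr_ge0 => j /andP[hj _].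
  by rewrite invr_ge0 ltW // hf.
have := ler_wpM2l (ltW hfk) h1; rewrite mulfV ?lt0r_neq0 // => h2.
by rewrite -div1r ler_pdivrMr; lra.
Qed.

Lemma telescope_prefix (V : zmodType) d (F : nat -> V) (k : nat) :
  \sum_(i < d | (i <= k)%N) (F i.+1 - F i) = F (minn k.+1 d) - F 0%N.
Proof.
have -> : \sum_(i < d | (i <= k)%N) (F i.+1 - F i) =
    \sum_(i < d | xpredT i && (i < minn k.+1 d)%N) (F i.+1 - F i).
  by apply: eq_bigl => i; rewrite leq_min ltn_ord andbT.
rewrite -(@big_ord_widen_cond V 0 +%R (minn k.+1 d) d xpredT
  (fun i => F i.+1 - F i) (geq_minr k.+1 d)).
by rewrite -(big_mkord xpredT (fun i => F i.+1 - F i)) telescope_sumr.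
Qed.

Section Thermal.
Context {R : realType} {d : nat} {g : 'cV[R]_d}.
Hypotheses (g_gt0 : forall i, 0 < g i ord0) (g_sum1 : \sum_i g i ord0 = 1).

Lemma g_ge0 i : 0 <= g i ord0. Proof. exact: ltW. Qed.

Lemma g_neq0 i : g i ord0 != 0. Proof. exact: lt0r_neq0. Qed.

Lemma d_gt0 : (0 < d)%N.
Proof.
by case: d g g_sum1 => // g0; rewrite big_ord0 => /eqP; rewrite eq_sym oner_eq0.
Qed.

Lemma xprev0 (f : 'cV[R]_d) s : xprev f s 0 = 0.
Proof. by rewrite /xprev big_pred0. Qed.

Lemma xprevS (f : 'cV[R]_d) s (j : 'I_d) : xprev f s j.+1 = xprev f s j + f (s j) ord0.
Proof.
rewrite /xprev (bigD1 j) //= addrC; congr (_ + _); apply: eq_bigl => i.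
by rewrite -val_eqE /=; lia.
Qed.

Lemma xprev_full (f : 'cV[R]_d) s {m} : (d <= m)%N -> xprev f s m = \sum_i f i ord0.
Proof.
move=> hm; rewrite /xprev (eq_bigl xpredT); last by move=> i /=; have := ltn_ord i; lia.
exact: (@sum_perm R _ (fun i => f i ord0)).
Qed.

Lemma xprev_mono {f : 'cV[R]_d} {s m m'} : (forall i, 0 <= f i ord0) -> (m <= m')%N ->
  xprev f s m <= xprev f s m'.
Proof.
move=> f0 hm; rewrite /xprev [X in _ <= X]big_mkcond [X in X <= _]big_mkcond /=.
apply: ler_sum => i _; case: ifP => h1; first by rewrite ifT //; lia.
by case: ifP => _ //; apply: f0.
Qed.

Lemma xprev01 s m : 0 <= xprev g s m <= 1.
Proof.
rewrite -{1}(xprev0 g s) (xprev_mono g_ge0 (leq0n m)) /=.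
by rewrite -g_sum1 -(xprev_full g s (leq_maxl d m)) (xprev_mono g_ge0 (leq_maxr d m)).
Qed.

Lemma xkE s (j : 'I_d) : xk g s j = xprev g s j + g (s j) ord0.
Proof. exact: xprevS. Qed.

Lemma xk01 s k : 0 <= xk g s k <= 1.
Proof. exact: xprev01 s k.+1. Qed.

Lemma xprev_le_xk s k : xprev g s k <= xk g s k.
Proof. exact: xprev_mono g_ge0 (leqnSn k). Qed.

Lemma xk_full s k : (d <= k.+1)%N -> xk g s k = 1.
Proof. by move=> hk; rewrite -g_sum1 -(xprev_full g s hk). Qed.

(* The length of [0, t] meeting the [j]-th segment [xprev g s j, xk g s j]. *)
Definition cover (t : R) (s : 'S_d) (j : 'I_d) : R :=
  if t <= xprev g s j then 0
  else if xk g s j <= t then g (s j) ord0 else t - xprev g s j.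

Lemma cover_mono s j t1 t2 : t1 <= t2 -> cover t1 s j <= cover t2 s j.
Proof.
move=> ht; rewrite /cover; have := xkE s j; have := g_ge0 (s j).
set a := xprev g s j; set b := xk g s j => h1 h2.
by case: (leP t1 a) => ?; case: (leP b t1) => ?; case: (leP t2 a) => ?;
  case: (leP b t2) => ?; lra.
Qed.

Lemma cover0 s j : cover 0 s j = 0.
Proof. by rewrite /cover ifT //; case/andP: (xprev01 s j). Qed.

Lemma cover1 s j : cover 1 s j = g (s j) ord0.
Proof.
rewrite /cover; have := xkE s j; have := g_gt0 (s j).
have /andP[_] := xprev01 s j.+1; rewrite xprevS.
set a := xprev g s j; set b := xk g s j => h1 h2 h3.
by case: (leP 1 a) => ?; case: (leP b 1) => ?; lra.
Qed.

Lemma exists_segment s {t} : 0 <= t <= 1 ->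
  exists k : 'I_d, xprev g s k <= t <= xk g s k.
Proof.
move=> /andP[t0 t1]; have hd := d_gt0.
have hex : exists m, (m < d)%N && (t <= xk g s m).
  by exists d.-1; rewrite xk_full ?t1 ?andbT; lia.
case: (ex_minnP hex) => m /andP[hm1 hm2] hmin; exists (Ordinal hm1).
rewrite hm2 andbT /=; case: m hm1 hm2 hmin => [|m] hm1 hm2 hmin; first by rewrite xprev0.
case: (leP t (xk g s m)) => h; last exact: ltW.
by have := hmin m; rewrite h andbT => /(_ (ltnW hm1)); rewrite ltnn.
Qed.

Lemma cover_segment {s t} {k : 'I_d} : xprev g s k <= t <= xk g s k ->
  forall j, cover t s j = if (j < k)%N then g (s j) ord0
                else if j == k then t - xprev g s k else 0.
Proof.
move=> /andP[hk1 hk2] j; rewrite /cover; have := xkE s j; have := g_ge0 (s j).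
case: (ltngtP j k) => hjk.
- have : xk g s j <= xprev g s k by apply: xprev_mono g_ge0 hjk.
  set a := xprev g s j; set b := xk g s j => h1 h2 h3.
  by case: (leP t a) => ?; case: (leP b t) => ?; lra.
- have : xk g s k <= xprev g s j by apply: xprev_mono g_ge0 hjk.
  by move=> h _ _; rewrite ifT ?(le_trans hk2) // -val_eqE /= gtn_eqF.
- have -> : j = k by apply: val_inj.
  rewrite eqxx; move: hk1 hk2.
  set a := xprev g s k; set b := xk g s k => h0 h1 h2 h3.
  by case: (leP t a) => ?; case: (leP b t) => ?; lra.
Qed.

Lemma cover_sum_segment {s t} {k : 'I_d} (c : 'I_d -> R) :
  xprev g s k <= t <= xk g s k ->
  \sum_j cover t s j * c j =
  \sum_(j < d | (j < k)%N) g (s j) ord0 * c j + (t - xprev g s k) * c k.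
Proof.
move=> hk; rewrite (bigD1 k) //= (cover_segment hk) ltnn eqxx addrC.
congr (_ + _); rewrite big_mkcond [RHS]big_mkcond /=; apply: eq_bigr => j _.
rewrite (cover_segment hk) -val_eqE /=.
by case: (ltngtP j k) => hjk; rewrite /= ?(ltn_eqF hjk) ?(gtn_eqF hjk) ?mul0r.
Qed.

Lemma cover_sum s t : 0 <= t <= 1 -> \sum_j cover t s j = t.
Proof.
move=> /(exists_segment s) [k hk].
have := cover_sum_segment (fun _ => 1) hk; under eq_bigr do rewrite mulr1.
by move=> ->; under eq_bigr do rewrite mulr1; rewrite mulr1 -/(xprev g s k); lra.
Qed.

(* For [s] admissible for [p], the graph of [curve p s] is beta(p). *)
Definition curve (p : 'cV[R]_d) s t :=
  \sum_j cover t s j * (p (s j) ord0 / g (s j) ord0).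

Lemma curve0 p s : curve p s 0 = 0.
Proof. by rewrite /curve big1 // => j _; rewrite cover0 mul0r. Qed.

Lemma curve1 p s : curve p s 1 = \sum_i p i ord0.
Proof.
rewrite /curve -(@sum_perm R _ (fun i => p i ord0) s); apply: eq_bigr => j _.
by rewrite cover1 mulrC divfK ?g_neq0.
Qed.

Lemma curve_segment p {s t} {k : 'I_d} : xprev g s k <= t <= xk g s k ->
  curve p s t = yprev p s k + (t - xprev g s k) * (p (s k) ord0 / g (s k) ord0).
Proof.
move=> hk; rewrite /curve (cover_sum_segment _ hk); congr (_ + _).
by apply: eq_bigr => j _; rewrite mulrC divfK ?g_neq0.
Qed.

(* Fractional knapsack: the concave curve lies below each of its tangents. *)
Lemma weighted_sum_le_tangent p s (u : 'I_d -> R) (k : 'I_d) : admissible g p s ->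
  (forall j, 0 <= u j <= 1) ->
  \sum_j u j * p j ord0 <=
  yprev p s k + (\sum_j u j * g j ord0 - xprev g s k) * (p (s k) ord0 / g (s k) ord0).
Proof.
move=> hp hu; set rho := p (s k) ord0 / g (s k) ord0.
suff : \sum_j u (s j) * (p (s j) ord0 - rho * g (s j) ord0) <=
       \sum_(j < d | (j < k)%N) (p (s j) ord0 - rho * g (s j) ord0).
  rewrite sumrB -big_distrr /= -/(yprev p s k) -/(xprev g s k).
  under eq_bigr do rewrite mulrBr mulrCA.
  rewrite sumrB -big_distrr /= (@sum_perm R _ (fun j => u j * p j ord0)).
  by rewrite (@sum_perm R _ (fun j => u j * g j ord0)); lra.
rewrite [X in _ <= X]big_mkcond /=; apply: ler_sum => j _.
have ep : p (s j) ord0 - rho * g (s j) ord0 =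
    g (s j) ord0 * (p (s j) ord0 / g (s j) ord0 - rho).
  by field; apply: g_neq0.
have /andP[u0 u1] := hu (s j); rewrite ep; case: ifP => hjk.
- rewrite ler_piMl // mulr_ge0 ?g_ge0 // subr_ge0; apply: hp; lia.
- rewrite mulr_ge0_le0 // mulr_ge0_le0 ?g_ge0 // subr_le0; apply: hp; lia.
Qed.

Lemma orbit_yk_le_tangent {p T s} s' k (k' : 'I_d) : is_TP g T -> admissible g p s ->
  yk (T *m p) s' k <=
  yprev p s k' + (xk g s' k - xprev g s k') * (p (s k') ord0 / g (s k') ord0).
Proof.
case=> hT0 hTc hTg hp.
pose u j := \sum_(i < d | (i <= k)%N) T (s' i) j.
have hu j : 0 <= u j <= 1.
  rewrite sumr_ge0 => [|i _]; last exact: hT0.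
  rewrite -(hTc j) -(@sum_perm R _ (fun i => T i j) s') /u [X in X <= _]big_mkcond /=.
  by apply: ler_sum => i _; case: ifP => // _; apply: hT0.
have hsum (v v' : 'cV[R]_d) : (forall i, v i ord0 = \sum_j T i j * v' j ord0) ->
    yk v s' k = \sum_j u j * v' j ord0.
  move=> hv; rewrite /yk /u; under eq_bigr do rewrite hv.
  by rewrite exchange_big /=; apply: eq_bigr => j _; rewrite mulr_suml.
rewrite (hsum (T *m p) p) => [|i]; last by rewrite mxE.
rewrite -[xk g s' k]/(yk g s' k) (hsum g g) => [|i]; first exact: weighted_sum_le_tangent.
by rewrite -[LHS](congr1 (fun M : 'cV_d => M i ord0) hTg) mxE.
Qed.

Lemma orbit_yk_le_curve p T s s' k : is_TP g T -> admissible g p s ->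
  yk (T *m p) s' k <= curve p s (xk g s' k).
Proof.
move=> hT hp; have [k' hk'] := exists_segment s (xk01 s' k).
by rewrite (curve_segment _ hk'); apply: orbit_yk_le_tangent.
Qed.

Lemma TP_mul A B : is_TP g A -> is_TP g B -> is_TP g (A *m B).
Proof.
case=> hA0 hAc hAg [hB0 hBc hBg]; split.
- by move=> i j; rewrite mxE; apply: sumr_ge0 => l _; apply: mulr_ge0.
- move=> j; under eq_bigr do rewrite mxE.
  by rewrite exchange_big /= -(hBc j); apply: eq_bigr => l _; rewrite -mulr_suml hAc mul1r.
- by rewrite -mulmxA hBg hAg.
Qed.

Lemma TP_conv (a b : R) A B : 0 <= a -> 0 <= b -> a + b = 1 ->
  is_TP g A -> is_TP g B -> is_TP g (a *: A + b *: B).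
Proof.
move=> ha hb hab [hA0 hAc hAg] [hB0 hBc hBg]; split.
- by move=> i j; rewrite !mxE; apply: addr_ge0; apply: mulr_ge0.
- move=> j; under eq_bigr do rewrite !mxE.
  by rewrite big_split /= -!big_distrr /= hAc hBc !mulr1.
- by rewrite mulmxDl -!scalemxAl hAg hBg -scalerDl hab scale1r.
Qed.

Lemma orbit_conv p (a b : R) x y : 0 <= a -> 0 <= b -> a + b = 1 ->
  thermal_orbit g p x -> thermal_orbit g p y -> thermal_orbit g p (a *: x + b *: y).
Proof.
move=> ha hb hab [A [hA ->]] [B [hB ->]]; exists (a *: A + b *: B).
by rewrite mulmxDl -!scalemxAl; split => //; apply: TP_conv.
Qed.

Lemma orbit_sum1 {p T} : is_state p -> is_TP g T -> \sum_i (T *m p) i ord0 = 1.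
Proof.
case=> _ hp [_ hTc _]; under eq_bigr do rewrite mxE.
by rewrite exchange_big /= -hp; apply: eq_bigr => j _; rewrite -mulr_suml hTc mul1r.
Qed.

Lemma orbit_ge0 {p T} : is_state p -> is_TP g T -> forall i, 0 <= (T *m p) i ord0.
Proof.
case=> hp _ [hT _ _] i; rewrite mxE.
by apply: sumr_ge0 => j _; apply: mulr_ge0.
Qed.

(* Row [sg k] collects from every segment of [curve p pi] the part lying over
   the [k]-th segment of the [sg]-partition of [0, 1]. *)
Definition curve_map (sg pi : 'S_d) : 'M[R]_d := \matrix_(a, b)
  ((cover (xk g sg (sg^-1 a)%g) pi (pi^-1 b)%g
    - cover (xprev g sg (sg^-1 a)%g) pi (pi^-1 b)%g) / g b ord0).

Lemma curve_map_TP sg pi : is_TP g (curve_map sg pi).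
Proof.
split.
- move=> a b; rewrite mxE divr_ge0 ?g_ge0 // subr_ge0.
  exact: cover_mono (xprev_le_xk _ _).
- move=> b; rewrite -(@sum_perm R _ _ sg); under eq_bigr do rewrite mxE permK.
  pose h m := cover (xprev g sg m) pi (pi^-1 b)%g.
  rewrite -mulr_suml -(big_mkord xpredT (fun i => h i.+1 - h i)) telescope_sumr //.
  by rewrite /h xprev0 cover0 xprev_full // g_sum1 cover1 permKV subr0 divff ?g_neq0.
- apply/matrixP => a z; rewrite (ord1 z) !mxE -(@sum_perm R _ _ pi).
  under eq_bigr do rewrite mxE permK divfK ?g_neq0 //.
  by rewrite sumrB !cover_sum ?xk01 ?xprev01 // xkE permKV; lra.
Qed.

Lemma curve_map_entry p sg pi (k : 'I_d) : (curve_map sg pi *m p) (sg k) ord0 =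
  curve p pi (xk g sg k) - curve p pi (xprev g sg k).
Proof.
rewrite mxE -(@sum_perm R _ _ pi) /curve -sumrB; apply: eq_bigr => j _.
by rewrite mxE !permK; field; apply: g_neq0.
Qed.

Lemma yk_curve_map p sg pi k :
  yk (curve_map sg pi *m p) sg k = curve p pi (xk g sg k).
Proof.
rewrite /yk; under eq_bigr do rewrite curve_map_entry.
rewrite (@telescope_prefix R d (fun m => curve p pi (xprev g sg m))) xprev0 curve0 subr0.
by case: (leqP k.+1 d) => hk; rewrite ?(minn_idPl hk) // xk_full ?xprev_full ?g_sum1 // ltnW.
Qed.

Lemma exists_TP_of_yk_le (y v : 'cV[R]_d) sg : admissible g y sg ->
  (forall k, yk y sg k <= yk v sg k) -> \sum_i y i ord0 = \sum_i v i ord0 ->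
  exists S, is_TP g S /\ S *m v = y.
Proof.
move=> hy hdom htot; pose pos i := nat_of_ord (sg^-1 i)%g.
have hin i : in_block pos 0 d i by rewrite /in_block /pos ltn_ord.
have hpre (f : 'cV[R]_d) k : prefix_sum pos (fun i => f i ord0) 0 d k = yk f sg k.
  rewrite /prefix_sum (reindex_inj (@perm_inj _ sg)) /=; apply: eq_bigl => i.
  by rewrite /in_block /pos permK /= ltn_ord.
have hblock (f : 'cV[R]_d) : block_sum pos (fun i => f i ord0) 0 d = \sum_i f i ord0.
  by apply: eq_bigl => i; rewrite hin.
have [|k|/=|S [h0 _ hc hw hv]] := @block_map_exists R d (fun i => g i ord0) pos g_gt0
    (fun i => y i ord0) (fun i => v i ord0) 0 d.
- by move=> i j _ _ hij; have := hy _ _ hij; rewrite !permKV.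
- by rewrite !hpre.
- by rewrite !hblock.
exists S; split; first split => // [j|]; first exact: hc.
  by apply/matrixP => i z; rewrite (ord1 z) mxE hw.
by apply/matrixP => i z; rewrite (ord1 z) mxE hv.
Qed.

Lemma yk_lt_curve {p r sg pi} : thermal_orbit g p r ->
  admissible g r sg -> admissible g p pi ->
  ~ (exists pt, is_elbow g r pt /\ on_curve g p pt) ->
  forall k : 'I_d, (k.+1 < d)%N -> yk r sg k < curve p pi (xk g sg k).
Proof.
move=> [T [hT er]] hr hp hno k hk.
rewrite lt_neqAle {2}er orbit_yk_le_curve // andbT; apply/eqP => heq; apply: hno.
have [k' hk'] := exists_segment pi (xk01 sg k).
exists (xk g sg k, yk r sg k); split; first by exists sg; split => //; exists k.
exists pi; split => //; exists k'; rewrite /= heq (curve_segment _ hk').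
by case/andP: hk' => -> ->.
Qed.

Lemma orbit_stretch {p r} : is_state p -> thermal_orbit g p r ->
  ~ (exists pt, is_elbow g r pt /\ on_curve g p pt) ->
  exists mu, 0 < mu /\
    thermal_orbit g p (\col_i ((1 + mu) * r i ord0 - mu * g i ord0)).
Proof.
move=> hp hr hno; have [T [hT er]] := hr.
have [sg hsg] := exists_perm_sorted (fun i => r i ord0 / g i ord0).
have [pi hpi] := exists_perm_sorted (fun i => p i ord0 / g i ord0).
have hgap (k : 'I_d) : (k.+1 < d)%N -> 0 < curve p pi (xk g sg k) - yk r sg k.
  by move=> hk; rewrite subr_gt0 (yk_lt_curve hr hsg hpi hno).
have [mu [mu0 hmu]] := exists_pos_lower_bound hgap.
exists mu; split => //; set rm := \col_i _.
have r_sum1 : \sum_i r i ord0 = 1 by rewrite er (orbit_sum1 hp hT).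
have yk_rm k : yk rm sg k = (1 + mu) * yk r sg k - mu * xk g sg k.
  by rewrite /yk /xk; under eq_bigr do rewrite mxE; rewrite sumrB -!big_distrr.
have ratio_rm i : rm i ord0 / g i ord0 = (1 + mu) * (r i ord0 / g i ord0) - mu.
  by rewrite mxE; field; apply: g_neq0.
have [S [hS eS]] : exists S, is_TP g S /\ S *m (curve_map sg pi *m p) = rm.
  apply: (@exists_TP_of_yk_le rm _ sg) => [i j hij|k|].
  - by rewrite !ratio_rm lerD2r ler_wpM2l ?hsg //; lra.
  - rewrite yk_rm yk_curve_map; case: (ltnP k.+1 d) => hk; last first.
      rewrite xk_full // curve1 (proj2 hp) -[yk r sg k]/(xprev r sg k.+1).
      by rewrite xprev_full // r_sum1; lra.
    have := hmu (Ordinal (ltnW hk)) hk; have /andP[hx _] := xk01 sg k.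
    have : yk r sg k <= 1.
      rewrite -r_sum1 -[yk r sg k]/(xprev r sg k.+1) -(xprev_full r sg (leqnn d)).
      by apply: xprev_mono; [rewrite er; apply: orbit_ge0 | exact: ltnW].
    move=> /= hy hmu'; have : mu * (yk r sg k - xk g sg k) <= mu * 1.
      by apply: ler_wpM2l; lra.
    lra.
  - rewrite (orbit_sum1 hp (curve_map_TP sg pi)); under eq_bigr do rewrite mxE.
    by rewrite sumrB -!big_distrr /= r_sum1 g_sum1; lra.
exists (S *m curve_map sg pi); split; first exact: TP_mul hS (curve_map_TP _ _).
by rewrite -mulmxA eS.
Qed.

Lemma g_le1 i : g i ord0 <= 1.
Proof. by rewrite -g_sum1 (bigD1 i) //= lerDl sumr_ge0 // => j _; apply: g_ge0. Qed.

(* [T = g 1^T + (z - g) u^T] with [u^T g = 0] and [u^T p = 1] maps [p] to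
   [z]; it is nonnegative as soon as [z] is close enough to [g]. *)
Lemma gibbs_ball_in_orbit {p} : is_state p -> p != g ->
  exists eps, 0 < eps /\ forall z, in_hyperplane z ->
    (forall i, `|z i ord0 - g i ord0| < eps) -> thermal_orbit g p z.
Proof.
move=> hp hpg; have : ~~ [forall j, p j ord0 == g j ord0].
  by apply: contra hpg => /forallP h; apply/eqP/matrixP => i z; rewrite (ord1 z); apply/eqP.
case/forallPn => j0 hj0; set c := (p j0 ord0 - g j0 ord0)^-1.
pose u j := c * ((j == j0)%:R - g j0 ord0).
have hu (v : 'cV[R]_d) : \sum_j u j * v j ord0 = c * (v j0 ord0 - g j0 ord0 * \sum_j v j ord0).
  under eq_bigr do rewrite -mulrA mulrBl.
  rewrite -big_distrr sumrB -big_distrr /= (bigD1 j0) //= eqxx mul1r big1 ?addr0 //.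
  by move=> j /negbTE ->; rewrite mul0r.
have hug : \sum_j u j * g j ord0 = 0 by rewrite hu g_sum1 mulr1 subrr mulr0.
have hup : \sum_j u j * p j ord0 = 1.
  by rewrite hu (proj2 hp) mulr1 /c mulVf // subr_eq0.
have hub j : `|u j| <= `|c|.
  rewrite normrM -[X in _ <= X]mulr1 ler_wpM2l // ler_norml.
  have := g_gt0 j0; have := g_le1 j0.
  by case: (j == j0) => /= h1 h2; apply/andP; split; lra.
have [gm [gm0 hgm]] := @exists_pos_lower_bound R d xpredT _ (fun i _ => g_gt0 i).
have c1 : 0 < `|c| + 1 by have := normr_ge0 c; lra.
exists (gm / (`|c| + 1)); split => [|z hz hnear]; first exact: divr_gt0.
pose Tz : 'M[R]_d := \matrix_(i, j) (g i ord0 + (z i ord0 - g i ord0) * u j).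
exists Tz; split; last first.
  apply/matrixP => i k; rewrite (ord1 k) mxE; under eq_bigr do rewrite mxE mulrDl -mulrA.
  by rewrite big_split /= -!big_distrr /= (proj2 hp) hup !mulr1 addrC subrK.
split => [i j|j|].
- rewrite mxE; have := hnear i; have := hub j; have := hgm i isT.
  have := normr_ge0 (z i ord0 - g i ord0); have := normr_ge0 (u j).
  move=> h1 h2 h3 h4 h5.
  have : `|(z i ord0 - g i ord0) * u j| <= gm.
    rewrite normrM (le_trans (ler_pM h2 h1 (ltW h5) h4)) //.
    by rewrite mulrAC ler_pdivrMr // ler_wpM2l; lra.
  by rewrite ler_norml => /andP[]; lra.
- under eq_bigr do rewrite mxE; rewrite big_split /= -mulr_suml sumrB g_sum1.
  by rewrite hz subrr mul0r addr0.
- apply/matrixP => i k; rewrite (ord1 k) mxE; under eq_bigr do rewrite mxE mulrDl -mulrA.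
  by rewrite big_split /= -!big_distrr /= g_sum1 hug mulr0 mulr1 addr0.
Qed.

Lemma orbit_interior {p r} : is_state p -> p != g -> thermal_orbit g p r ->
  ~ (exists pt, is_elbow g r pt /\ on_curve g p pt) ->
  exists eps, 0 < eps /\ forall x, in_hyperplane x ->
    (forall i, `|x i ord0 - r i ord0| < eps) -> thermal_orbit g p x.
Proof.
move=> hp hpg hr hno; have [mu [mu0 hrm]] := orbit_stretch hp hr hno.
have [eps [eps0 hball]] := gibbs_ball_in_orbit hp hpg.
have r_sum1 : in_hyperplane r by case: hr => T [hT ->]; apply: orbit_sum1.
have mu1 : 0 < 1 + mu by lra.
set K := (1 + mu) / mu; have K0 : 0 < K by apply: divr_gt0.
exists (eps / K); split => [|x hx hnear]; first exact: divr_gt0.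
pose z : 'cV[R]_d := \col_i (g i ord0 + K * (x i ord0 - r i ord0)).
have hz : thermal_orbit g p z.
  apply: hball => [|i].
    rewrite /in_hyperplane; under eq_bigr do rewrite mxE.
    by rewrite big_split /= -big_distrr /= sumrB hx r_sum1 g_sum1 subrr mulr0 addr0.
  by rewrite mxE addrC addKr normrM gtr0_norm // mulrC -ltr_pdivlMr.
have -> : x = (1 + mu)^-1 *: \col_i ((1 + mu) * r i ord0 - mu * g i ord0)
    + (mu / (1 + mu)) *: z.
  apply/matrixP => i k; rewrite (ord1 k) !mxE /K.
  by field; rewrite !lt0r_neq0.
apply: orbit_conv hrm hz; rewrite ?invr_ge0 ?divr_ge0 ?ltW //.
by field; rewrite lt0r_neq0.
Qed.

Lemma sum_move_mass (r : 'cV[R]_d) (a b : 'I_d) e :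
  \sum_i (r i ord0 + e * ((i == a)%:R - (i == b)%:R)) = \sum_i r i ord0.
Proof.
have hone (c : 'I_d) : \sum_i (i == c)%:R = 1 :> R.
  by rewrite (bigD1 c) //= eqxx big1 ?addr0 // => i /negbTE ->.
by rewrite big_split /= -big_distrr /= sumrB !hone subrr mulr0 addr0.
Qed.

Lemma yk_move_mass (r : 'cV[R]_d) (s : 'S_d) (a b : 'I_d) e k : (a <= k < b)%N ->
  yk (\col_i (r i ord0 + e * ((i == s a)%:R - (i == s b)%:R))) s k = yk r s k + e.
Proof.
move=> /andP[hak hkb]; rewrite /yk; under eq_bigr do rewrite mxE !(inj_eq perm_inj).
rewrite big_split /= -big_distrr /= sumrB.
have -> : \sum_(i < d | (i <= k)%N) (i == a)%:R = 1 :> R.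
  by rewrite (bigD1 a) //= eqxx big1 ?addr0 // => i /andP[_ /negbTE ->].
have -> : \sum_(i < d | (i <= k)%N) (i == b)%:R = 0 :> R.
  apply: big1 => i hi; suff /negbTE -> : i != b by [].
  by rewrite -val_eqE neq_ltn (leq_ltn_trans hi hkb).
by rewrite subr0 mulr1.
Qed.

Lemma elbow_on_curve_rel_boundary p r : (1 < d)%N -> is_state p ->
  thermal_orbit g p r -> (exists pt, is_elbow g r pt /\ on_curve g p pt) ->
  rel_boundary (thermal_orbit g p) r.
Proof.
move=> hd hp hr [_ [[sg [hsg [k [hk ->]]]] [pi [hpi [k' [_ _ /= hcurve]]]]]].
have r_sum1 : in_hyperplane r by case: hr => T [hT ->]; apply: orbit_sum1.
split => //; split => eps heps; first by exists r; split => // i; rewrite subrr normr0.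
pose first : 'I_d := Ordinal d_gt0; have hlast : (d.-1 < d)%N by rewrite ltn_predL d_gt0.
pose x : 'cV[R]_d := \col_i (r i ord0 + eps / 2 *
  ((i == sg first)%:R - (i == sg (Ordinal hlast))%:R)).
exists x; split.
- by rewrite /in_hyperplane; under eq_bigr do rewrite mxE; rewrite sum_move_mass.
- move=> i; rewrite mxE addrC addKr normrM ger0_norm ?divr_ge0 ?ltW //.
  have : `|(i == sg first)%:R - (i == sg (Ordinal hlast))%:R| <= 1 :> R.
    by case: (_ == _); case: (_ == _);
      rewrite ?subrr ?subr0 ?sub0r ?normrN ?normr0 ?normr1 ?ler01 ?lexx.
  by move=> h; rewrite (le_lt_trans (ler_wpM2l _ h)) ?divr_ge0 ?ltW //; lra.
- move=> [T' [hT' ex]]; have := orbit_yk_le_tangent sg k k' hT' hpi.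
  by rewrite -ex yk_move_mass /=; [lra | lia].
Qed.

Lemma orbit_of_gibbs r : thermal_orbit g g r -> r = g.
Proof. by case=> T [[_ _ hTg] ->]. Qed.

Lemma gibbs_elbow_on_curve : (1 < d)%N ->
  exists pt, is_elbow g g pt /\ on_curve g g pt.
Proof.
move=> hd; have hadm : admissible g g 1%g by move=> i j _; rewrite !perm1 !divff ?g_neq0.
exists (xk g 1%g 0, yk g 1%g 0); split.
  by exists 1%g; split => //; exists (Ordinal (ltnW hd)).
exists 1%g; split => //; exists (Ordinal (ltnW hd)); split => /=.
- exact: xprev_le_xk.
- exact: lexx.
- rewrite -[yk g _ _]/(xk g 1%g 0) -[yprev g _ _]/(xprev g 1%g 0) xprev0.
  by rewrite divff ?g_neq0 // mulr1 subr0 add0r.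
Qed.

End Thermal.

Section Gibbs.
Variables (R : realType) (d : nat) (beta : R) (E : 'I_d -> R) (i0 : 'I_d).

Lemma partition_gt0 : 0 < \sum_j qfac beta E j i0.
Proof.
rewrite (bigD1 i0) //= ltr_pwDl ?expR_gt0 //.
by apply: sumr_ge0 => j _; apply: ltW; apply: expR_gt0.
Qed.

Lemma gibbs_gt0 i : 0 < gibbs beta E i0 i ord0.
Proof. by rewrite mxE divr_gt0 ?expR_gt0 ?partition_gt0. Qed.

Lemma gibbs_sum1 : \sum_i gibbs beta E i0 i ord0 = 1.
Proof.
under eq_bigr do rewrite mxE.
by rewrite -mulr_suml divff // lt0r_neq0 // partition_gt0.
Qed.

End Gibbs.

Theorem mainTheorem4 (R : realType) (d : nat) (i0 : 'I_d) (beta : R)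
    (E : 'I_d -> R) (p r : 'cV[R]_d) :
  (2 <= d)%N -> 0 < beta ->
  nat_of_ord i0 = 0%N -> E i0 = 0 -> injective E ->
  is_state p ->
  thermal_orbit (gibbs beta E i0) p r ->
  (rel_boundary (thermal_orbit (gibbs beta E i0) p) r <->
   exists pt : R * R, is_elbow (gibbs beta E i0) r pt /\
                      on_curve (gibbs beta E i0) p pt).
Proof.
move=> hd _ _ _ _ hp hr.
have g_gt0 := @gibbs_gt0 R d beta E i0; have g_sum1 := @gibbs_sum1 R d beta E i0.
split; last exact: elbow_on_curve_rel_boundary.
case: (eqVneq p (gibbs beta E i0)) => [epg | hpg] hbd.
  by move: hr; rewrite epg => /orbit_of_gibbs ->; apply: gibbs_elbow_on_curve.
apply: NNPP => hno; have [eps [eps0 hin]] := orbit_interior g_gt0 g_sum1 hp hpg hr hno.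
by case: hbd => _ [_ /(_ eps eps0) [x [hx hnear]]]; apply; apply: hin.
Qed.
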